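(* Let $G$ be an $m$-player $n_0$-action normal-form game with payoff tensors $M_1,\dots,M_m$, let $\epsilon>0$, and let $\mathcal{G}=\mathcal{G}(G)$ be the $(m+1)$-player Markov game described in the context. For any $i\in[m]$, any state $s$, any $h\in[H]$, and any product distribution $q$ over $\bar{\mathcal{A}}_{-i}:=\prod_{j\in[m+1]\setminus\{i\}}\mathcal{A}_j$, it holds that $\max_{a_i'\in\mathcal{A}_i}\mathbb{E}_{\mathbf{a}\sim q}[R_{i,h}(s,(a_i',\mathbf{a}))]\ge0$.
   Context: The Markov game $\mathcal{G}(G)$: horizon $H$ is the power of $2$ with $n_0\le H<2n_0$; players $1,\dots,m$ have action sets $\mathcal{A}_1=\dots=\mathcal{A}_m=[n_0]$; player $m+1$ (the ``kibitzer'') has action set $\mathcal{A}_{m+1}=\{(j,a_j): j\in[m],a_j\in\mathcal{A}_j\}$; $\bar{\mathcal{A}}=\prod_{j=1}^{m+1}\mathcal{A}_j$; there is a single state $\mathfrak{s}$. For $h\in[H]$ and action profile $\mathbf{a}=(a_1,\dots,a_{m+1})$ with $a_{m+1}=(j',a_{j'}')$, the reward to player $j\in[m+1]$ is $R_{j,h}(\mathfrak{s},\mathbf{a})=\bar R_{j,h}(\mathfrak{s},\mathbf{a})+\frac1H2^{-3\lceil\log(1/\epsilon)\rceil}\mathrm{enc}(\mathbf{a})$, where $\mathrm{enc}(\mathbf{a})=\sum_{k}2^{-k}b_k\in[0,1]$ for $(b_1,b_2,\dots)$ a binary encoding of $\mathbf{a}$, and $\bar R_{j,h}(\mathfrak{s},\mathbf{a})=0$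 if $j\notin\{j',m+1\}$; $\bar R_{j,h}(\mathfrak{s},\mathbf{a})=\frac1H\big((M_j)_{a_1,\dots,a_m}-(M_j)_{a_1,\dots,a_{j'}',\dots,a_m}\big)$ if $j=j'$; and $\bar R_{m+1,h}(\mathfrak{s},\mathbf{a})=\frac1H\big((M_{j'})_{a_1,\dots,a_{j'}',\dots,a_m}-(M_{j'})_{a_1,\dots,a_m}\big)$, where $(a_1,\dots,a_{j'}',\dots,a_m)$ denotes $(a_1,\dots,a_m)$ with the $j'$-th coordinate replaced by $a_{j'}'$. *)

From HB Require Import structures.
From mathcomp Require Import all_boot all_order all_algebra.
From mathcomp Require Import all_classical all_reals all_analysis.
Set Implicit Arguments. Unset Strict Implicit. Unset Printing Implicit Defensive.
Import Order.TTheory GRing.Theory Num.Theory.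
Local Open Scope ring_scope.

Definition jprof (m n0 : nat) := {ffun 'I_m -> 'I_n0}.
(* Kibitzer actions (j, a_j) with j in [m], a_j in A_j = [n0]. *)
Definition kact (m n0 : nat) := ('I_m * 'I_n0)%type.
Definition fprof (m n0 : nat) := (jprof m n0 * kact m n0)%type.

Definition repl m n0 (a : jprof m n0) (j : 'I_m) (b : 'I_n0) : jprof m n0 :=
  [ffun k => if k == j then b else a k].

(* Binary encoding of an action profile: the profile is coded by its rank
   c in the enumeration of the finite type of profiles, written with
   L = up_log 2 #|profiles| bits (b_1 most significant), and
   enc(a) = sum_k 2^{-k} b_k. *)
Definition enc_len m n0 : nat := up_log 2 #|{: fprof m n0}|.
Definition enc_bit m n0 (a : fprof m n0) (k : nat) : nat :=
  odd ((enum_rank a : nat) %/ 2 ^ (enc_len m n0 - k)).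
Definition enc {R : realType} m n0 (a : fprof m n0) : R :=
  \sum_(1 <= k < (enc_len m n0).+1) (enc_bit a k)%:R / 2 ^+ k.

Definition clog {R : realType} (eps : R) : int := Num.ceil (ln (eps^-1) / ln 2).

(* Players: Some j for j in [m], None for the kibitzer (player m+1).
   Payoff tensors M j : joint action of the m players -> R. *)
Definition barR {R : realType} m n0 (H : nat) (M : 'I_m -> jprof m n0 -> R)
    (j : option 'I_m) (a : fprof m n0) : R :=
  let: (x, (j', b)) := a in
  match j with
  | Some j => if j == j' then (H%:R)^-1 * (M j x - M j (repl x j' b)) else 0
  | None => (H%:R)^-1 * (M j' (repl x j' b) - M j' x)
  end.

Definition state := unit.

Definition reward {R : realType} m n0 (H : nat) (eps : R)
    (M : 'I_m -> jprof m n0 -> R) (j : option 'I_m) (h : 'I_H) (s : state)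
    (a : fprof m n0) : R :=
  barR H M j a + (H%:R)^-1 * (2 : R) ^ (- (3 * clog eps)) * enc a.

Definition is_dist {R : realType} (T : finType) (p : T -> R) : Prop :=
  (forall x, 0 <= p x) /\ \sum_x p x = 1.

(* Expectation of f over a ~ q, where q is the product distribution over
   A_{-i} = prod_{j in [m+1], j <> i} A_j with marginals p j (j <> i, j in [m])
   and pk (kibitzer), and player i plays ai. *)
Definition expect_dev {R : realType} m n0 (i : 'I_m) (p : 'I_m -> 'I_n0 -> R)
    (pk : kact m n0 -> R) (ai : 'I_n0) (f : fprof m n0 -> R) : R :=
  \sum_(x : jprof m n0 | x i == ai) \sum_(b : kact m n0)
     ((\prod_(j < m | j != i) p j (x j)) * pk b * f (x, b)).

(* Every reward of the game is the bonus term, which is nonnegative because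
   [enc] is, plus [barR].  Player i only collects [barR] when the kibitzer
   names i, and then receives (1/H)(M_i(a) - M_i(a with a_i := b)).  Taking
   expectations, the coordinate a_i is fixed to the deviation a_i', so the
   expected [barR] is (1/H) sum_b q(i,b) (U(a_i') - U(b)), where U is the
   expected payoff of player i against the product of the other players'
   marginals.  A maximiser a_i' of U makes every term nonnegative. *)
From HB Require Import structures.
From mathcomp Require Import all_boot all_order all_algebra.
From mathcomp Require Import all_classical all_reals all_analysis.
From mathcomp Require Import ring.
Set Implicit Arguments. Unset Strict Implicit. Unset Printing Implicit Defensive.
Import Order.TTheory GRing.Theory Num.Theory.
Local Open Scope ring_scope.

Section Replace.
Variables m n0 : nat.

Lemma repl_repl (x : jprof m n0) j a b : repl (repl x j a) j b = repl x j b.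
Proof. by apply/ffunP => k; rewrite !ffunE; case: eqP. Qed.

Lemma repl_eq (x : jprof m n0) j a : (repl x j a == x) = (x j == a).
Proof.
apply/eqP/eqP => [<-|e]; first by rewrite ffunE eqxx.
by apply/ffunP => k; rewrite ffunE; case: eqP => // ->.
Qed.

Lemma repl_id (x : jprof m n0) j a : (repl x j a) j = a.
Proof. by rewrite ffunE eqxx. Qed.

Lemma repl_other (x : jprof m n0) j a k : k != j -> (repl x j a) k = x k.
Proof. by rewrite ffunE => /negbTE ->. Qed.

End Replace.

Section MixedPayoff.
Variables (R : realType) (m n0 : nat) (i : 'I_m) (p : 'I_m -> 'I_n0 -> R).

Definition others_weight (x : jprof m n0) : R :=
  \prod_(j < m | j != i) p j (x j).

Definition mixed_payoff (F : jprof m n0 -> R) (a : 'I_n0) : R :=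
  \sum_(x : jprof m n0 | x i == a) others_weight x * F x.

Lemma others_weight_repl x b : others_weight (repl x i b) = others_weight x.
Proof. by apply: eq_bigr => j /repl_other ->. Qed.

Lemma mixed_payoff_repl (F : jprof m n0 -> R) a b :
  \sum_(x : jprof m n0 | x i == a) others_weight x * F (repl x i b)
  = mixed_payoff F b.
Proof.
rewrite /mixed_payoff; symmetry.
rewrite (reindex_onto (fun x => repl x i b) (fun x => repl x i a)) /=; last first.
  by move=> x /eqP xi; rewrite repl_repl; apply/eqP; rewrite repl_eq xi.
apply: eq_big => [x|x _]; first by rewrite repl_repl repl_eq repl_id !eqxx.
by rewrite others_weight_repl.
Qed.

Hypothesis p_ge0 : forall j, j != i -> forall a, 0 <= p j a.

Lemma others_weight_ge0 x : 0 <= others_weight x.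
Proof. by apply: prodr_ge0 => j /p_ge0. Qed.

Variable pk : kact m n0 -> R.
Hypothesis pk_ge0 : forall b, 0 <= pk b.

Lemma ler_expect_dev a (f g : fprof m n0 -> R) :
  (forall y, f y <= g y) -> expect_dev i p pk a f <= expect_dev i p pk a g.
Proof.
move=> le_fg; apply: ler_sum => x _; apply: ler_sum => b _.
by rewrite ler_wpM2l // mulr_ge0 // others_weight_ge0.
Qed.

End MixedPayoff.

Lemma enc_ge0 (R : realType) m n0 (a : fprof m n0) : 0 <= enc a :> R.
Proof. by apply: sumr_ge0 => k _; rewrite divr_ge0. Qed.

Lemma barR_le_reward (R : realType) m n0 H (eps : R) M j (h : 'I_H) s
    (a : fprof m n0) :
  barR H M j a <= reward eps M j h s a.
Proof. by rewrite lerDl !mulr_ge0 ?invr_ge0 ?exprz_ge0 ?enc_ge0. Qed.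

Lemma expect_dev_barR (R : realType) m n0 H (M : 'I_m -> jprof m n0 -> R)
    i p pk a :
  expect_dev i p pk a (barR H M (Some i))
  = (H%:R)^-1 * \sum_(b < n0) pk (i, b)
                  * (mixed_payoff i p (M i) a - mixed_payoff i p (M i) b).
Proof.
have kibitzer_names_i x : \sum_(b : kact m n0)
      others_weight i p x * pk b * barR H M (Some i) (x, b)
    = \sum_(b < n0) others_weight i p x * pk (i, b)
        * ((H%:R)^-1 * (M i x - M i (repl x i b))).
  transitivity (\sum_(j < m) \sum_(b < n0)
      others_weight i p x * pk (j, b) * barR H M (Some i) (x, (j, b))).
    by rewrite pair_big /=; apply: eq_bigr => -[].
  rewrite (bigD1 i) //= [X in _ + X]big1 ?addr0 => [|j ji].
    by apply: eq_bigr => b _; rewrite eqxx.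
  by apply: big1 => b _; rewrite /= eq_sym (negbTE ji) mulr0.
rewrite /expect_dev (eq_bigr _ (fun x _ => kibitzer_names_i x)) exchange_big.
rewrite mulr_sumr; apply: eq_bigr => b _.
rewrite -(mixed_payoff_repl i p (M i) a b) /mixed_payoff -sumrB !mulr_sumr.
by apply: eq_bigr => x _; ring.
Qed.

Theorem lemmaC8 (R : realType) (m n0 : nat) (M : 'I_m -> jprof m n0 -> R)
    (eps : R) (heps : 0 < eps) (H k : nat) (hH : H = (2 ^ k)%N)
    (hH1 : (n0 <= H)%N) (hH2 : (H < 2 * n0)%N)
    (i : 'I_m) (s : state) (h : 'I_H)
    (p : 'I_m -> 'I_n0 -> R) (pk : kact m n0 -> R)
    (hp : forall j, j != i -> is_dist (p j)) (hpk : is_dist pk) :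
  exists ai : 'I_n0,
    0 <= expect_dev i p pk ai (@reward R m n0 H eps M (Some i) h s).
Proof.
have n0_gt0 : (0 < n0)%N by move: hH2; case: (n0) => //; rewrite muln0.
have p_ge0 j (ji : j != i) : forall a, 0 <= p j a by case: (hp j ji).
have [pk_ge0 _] := hpk.
have [ai _ ai_best] :=
  @arg_maxP _ R _ (Ordinal n0_gt0) xpredT (mixed_payoff i p (M i)) isT.
exists ai.
apply: le_trans (ler_expect_dev p_ge0 pk_ge0 ai (barR_le_reward eps M _ h s)).
rewrite expect_dev_barR mulr_ge0 ?invr_ge0 // sumr_ge0 // => b _.
by rewrite mulr_ge0 // subr_ge0; exact: (ai_best b isT).
Qed.
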